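(* Let $T$, $\mathcal{J}=\langle N,B\rangle$, an allocation $(\mathcal{C}_s,\mathcal{B}_s)$, a node $v$ and a scenario $\sigma$ be as in the context. If $T_v$ can offer $n_v$ working VMs in scenario $\sigma$ for some integer $n_v\in(N/2,N]$, then for every integer $m$ with $0\le m\le N-n_v$, $T_v$ can offer $m$ working VMs in scenario $\sigma$ (with the same bandwidth allocation $\mathcal{B}_s$).
   Context: $T=(V,L)$ is a rooted tree whose leaves form the set $H$ of physical machines (PMs) and whose internal nodes are switches; for a node $u$, $T_u$ is the subtree rooted at $u$ and $l_u$ is the link from $u$ to its parent. A request is $\mathcal{J}=\langle N,B\rangle$ with $N$ a positive integer and $B\ge0$. An allocation is a pair $(\mathcal{C}_s,\mathcal{B}_s)$ with $\mathcal{C}_s:H\to\mathbb{Z}_{\ge0}$ (VM slots allocated on each PM) and $\mathcal{B}_s:L\to\mathbb{R}_{\ge0}$ (bandwidth allocated on each link). A scenario is either ''no failure'' or the failure of a single PM $F\in H$. The subtree $T_v$ can offer $n$ working VMs in a scenario if there is an assignment $w:H\cap T_v\to\mathbb{Z}_{\ge0}$ with $w(h)\le\mathcal{C}_s(h)$ for all $h$, $w(F)=0$ if $F$ is the failed PM, $\sum_{h\in H\cap T_v}w(h)=n$, and for every node $u$ of $T_v$ (including $u=v$, whenever $l_u$ exists) $\min\{n_u,N-n_u\}\cdot B\le\mathcal{B}_s(l_u)$, where $n_u=\sum_{h\in H\cap T_u}w(h)$. *)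

From HB Require Import structures.
From mathcomp Require Import all_boot all_order all_algebra.
Set Implicit Arguments. Unset Strict Implicit. Unset Printing Implicit Defensive.
Import Order.TTheory GRing.Theory Num.Theory.
Local Open Scope ring_scope.

(* A rooted tree on the finite node set V is given by its parent map:
   [par u = Some p] means p is the parent of u, i.e. the link l_u joins u to p;
   [par u = None] means u is the root.  Links are identified with their lower
   endpoint u, so a bandwidth allocation is a function V -> R (only its values
   on non-root nodes are meaningful). *)

Definition child_rel (V : finType) (par : V -> option V) : rel V :=
  fun x y => par x == Some y.

(* [anc par u x]: u is an ancestor-or-self of x, i.e. x is a node of T_u. *)
Definition anc (V : finType) (par : V -> option V) (u x : V) : bool :=
  connect (child_rel par) x u.

(* the parent map describes a rooted tree: there is a root r (no parent) that
   every node reaches by following parents (this also forces acyclicity and the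
   uniqueness of the root). *)
Definition rooted_tree (V : finType) (par : V -> option V) : Prop :=
  exists r : V, par r = None /\ forall x : V, anc par r x.

(* leaves = physical machines (nodes without children) *)
Definition is_leaf (V : finType) (par : V -> option V) (h : V) : bool :=
  [forall x, par x != Some h].

(* n_u = number of working VMs assigned in the leaves of T_u *)
Definition nsub (V : finType) (par : V -> option V) (w : V -> nat) (u : V) : nat :=
  (\sum_(h | is_leaf par h && anc par u h) w h)%N.

(* T_v can offer n working VMs in the scenario F (None = no failure,
   Some f = failure of PM f) under allocation (Cs, Bs) for request <N, B>. *)
Definition can_offer (V : finType) (par : V -> option V) (R : realFieldType)
  (N : nat) (B : R) (Cs : V -> nat) (Bs : V -> R) (F : option V) (v : V) (n : nat)
  : Prop :=
  exists w : V -> nat,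
    [/\ (forall h, is_leaf par h -> anc par v h -> (w h <= Cs h)%N),
        (forall f, F = Some f -> w f = 0%N),
        nsub par w v = n &
        (forall u, anc par v u -> par u != None ->
           Num.min ((nsub par w u)%:R) (N%:R - (nsub par w u)%:R) * B <= Bs u)].

From HB Require Import structures.
From mathcomp Require Import all_boot all_order all_algebra.
From mathcomp Require Import zify.
Set Implicit Arguments. Unset Strict Implicit. Unset Printing Implicit Defensive.
Import Order.TTheory GRing.Theory Num.Theory.
Local Open Scope ring_scope.

(* Remove VMs one at a time from an assignment offering n_v until m remain.
   Every subtree T_u then holds n'_u <= n_u VMs, and n'_u + n_u <= m + n_v <= N,
   so its cut load min(n'_u, N - n'_u) <= n'_u <= min(n_u, N - n_u) can only
   drop and B_s(l_u) still suffices.  The hypothesis n_v > N/2 only serves to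
   guarantee m <= n_v. *)

Section ShrinkSum.

Variables (T : finType) (P : pred T).

Lemma sum_decr (w : T -> nat) : (0 < \sum_(x | P x) w x)%N ->
  exists2 w1 : T -> nat, (forall x, w1 x <= w x)%N &
    (\sum_(x | P x) w1 x)%N = (\sum_(x | P x) w x).-1.
Proof.
move=> sum_gt0.
have [h /andP[Ph wh_gt0] | w0] := pickP (fun x => P x && (0 < w x)%N); last first.
  by move: sum_gt0; rewrite big1 // => x Px; move: (w0 x); rewrite Px; case: (w x).
pose w1 x := if x == h then (w h).-1 else w x.
exists w1 => [x|]; first by rewrite /w1; case: eqP => [->|]; rewrite ?leq_pred.
rewrite (bigD1 h) // [in RHS](bigD1 h) //= {1}/w1 eqxx.
rewrite (eq_bigr w) => [|x /andP[_ /negbTE xh]]; last by rewrite /w1 xh.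
by case: (w h) wh_gt0.
Qed.

Lemma sum_shrink (w : T -> nat) (m : nat) : (m <= \sum_(x | P x) w x)%N ->
  exists2 w' : T -> nat, (forall x, w' x <= w x)%N &
    (\sum_(x | P x) w' x)%N = m.
Proof.
move def_k: (\sum_(x | P x) w x - m)%N => k.
elim: k w def_k => [|k IHk] w def_k le_m_sum.
  by exists w => //; apply/eqP; rewrite eqn_leq le_m_sum -subn_eq0 def_k.
have [w1 le_w1 sum_w1] := @sum_decr w ltac:(lia).
have [w' le_w' sum_w'] := IHk w1 ltac:(lia) ltac:(lia).
by exists w' => // x; apply: leq_trans (le_w' x) (le_w1 x).
Qed.

End ShrinkSum.

Section Subtrees.

Variables (V : finType) (par : V -> option V).

Lemma leq_nsub (w' w : V -> nat) (u : V) : (forall h, w' h <= w h)%N ->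
  (nsub par w' u <= nsub par w u)%N.
Proof. by move=> le_w; apply: leq_sum. Qed.

Lemma leq_nsub_anc (w : V -> nat) (u v : V) : anc par v u ->
  (nsub par w u <= nsub par w v)%N.
Proof.
move=> vu; rewrite /nsub [leqRHS]big_mkcond [leqLHS]big_mkcond.
apply: leq_sum => h _; case: (is_leaf par h) (boolP (anc par u h)) => //= -[uh|] //.
by rewrite /anc (connect_trans uh vu).
Qed.

End Subtrees.

Lemma le_min_cut (R : realFieldType) (N a b : nat) :
  (a <= b)%N -> (a + b <= N)%N ->
  Num.min (a%:R : R) (N%:R - a%:R) <= Num.min b%:R (N%:R - b%:R).
Proof.
move=> le_ab le_abN; apply: (@le_trans _ _ a%:R); first by rewrite ge_min lexx.
by rewrite le_min ler_nat le_ab lerBrDr -natrD ler_nat.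
Qed.

Lemma can_offer_shrink (V : finType) (par : V -> option V) (R : realFieldType)
  (N : nat) (B : R) (Cs : V -> nat) (Bs : V -> R) (F : option V) (v : V)
  (n m : nat) :
  0 <= B -> (m <= n)%N -> (m + n <= N)%N ->
  can_offer par N B Cs Bs F v n -> can_offer par N B Cs Bs F v m.
Proof.
move=> B_ge0 le_mn le_mnN [w [le_Cs F0 sum_w bw_ok]].
have [|w' le_w' sum_w'] := sum_shrink (P := fun h => is_leaf par h && anc par v h) (w := w) (m := m).
  by move: sum_w; rewrite /nsub => ->.
change (nsub par w' v = m) in sum_w'.
exists w'; split=> //.
- by move=> h hl vh; apply: leq_trans (le_w' h) (le_Cs h hl vh).
- by move=> f Ff; apply/eqP; rewrite -leqn0 -(F0 f Ff).
- move=> u vu pu; apply: le_trans (bw_ok u vu pu); rewrite ler_wpM2r //.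
  apply: le_min_cut; first exact: leq_nsub.
  have := leq_nsub_anc w' vu; have := leq_nsub_anc w vu.
  by rewrite sum_w' sum_w; lia.
Qed.

Theorem lemma1 (V : finType) (par : V -> option V) (R : realFieldType)
  (N : nat) (B : R) (Cs : V -> nat) (Bs : V -> R) (F : option V) (v : V)
  (nv : nat) :
  rooted_tree par ->
  (0 < N)%N -> 0 <= B ->
  (forall u, 0 <= Bs u) ->
  (forall f, F = Some f -> is_leaf par f) ->
  (N < 2 * nv)%N -> (nv <= N)%N ->
  can_offer par N B Cs Bs F v nv ->
  forall m : nat, (m <= N - nv)%N -> can_offer par N B Cs Bs F v m.
Proof.
move=> _ _ B_ge0 _ _ half_lt nv_le offer_nv m m_le.
have le_m_nv : (m <= nv)%N by lia.
have le_m_nvN : (m + nv <= N)%N by lia.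
exact: can_offer_shrink B_ge0 le_m_nv le_m_nvN offer_nv.
Qed.
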